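(* Let $\mathsf{K}$ be a quasivariety, $\mathbf{B}\in\mathsf{K}$, and $\mathbf{A}\leq\mathbf{B}$ full and not epic in $\mathsf{K}$. Then $\mathbf{A}$ is a subalgebra of some member of $\mathsf{K}_{\mathrm{RSI}}$, i.e., $\mathbf{A}\in\mathbb{S}(\mathsf{K}_{\mathrm{RSI}})$.
   Context: A quasivariety is a class of similar algebras closed under isomorphic copies, subalgebras, direct products and ultraproducts. $\mathbf{A}\leq\mathbf{B}$ is epic in $\mathsf{K}$ if for all $\mathbf{C}\in\mathsf{K}$ and homomorphisms $g,h\colon\mathbf{B}\to\mathbf{C}$, $g{\upharpoonright}_A=h{\upharpoonright}_A$ implies $g=h$. $\mathrm{Con}_{\mathsf{K}}(\mathbf{B})$ is the set of congruences $\theta$ of $\mathbf{B}$ with $\mathbf{B}/\theta\in\mathsf{K}$. $\mathbf{A}\leq\mathbf{B}$ is full in $\mathsf{K}$ if it is proper, almost total ($B=\mathrm{Sg}^{\mathbf{B}}(A\cup\{b\})$ for some $b$), and for every $\theta\in\mathrm{Con}_{\mathsf{K}}(\mathbf{B})$ with $\theta\neq\mathrm{id}_B$ and every $b\in B$ there is $a\in A$ with $\langle a,b\rangle\in\theta$. $\mathsf{K}_{\mathrm{RSI}}$ is the class of nontrivial members of $\mathsf{K}$ subdirectly irreducible relative to $\mathsf{K}$ (every subdirect embedding into a product of members of $\mathsf{K}$ has some projection that is an isomorphism). $\mathbb{S}$ denotes closure under (isomorphic copies of) subalgebras. *)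

From Stdlib Require Fin.
Set Implicit Arguments.
Unset Strict Implicit.

Record Sig := { sym : Type; arity : sym -> nat }.

Record Alg (s : Sig) := {
  car :> Type;
  op : forall o : sym s, (Fin.t (arity o) -> car) -> car }.

Arguments op {s} a o args.

Section UA.
Variable s : Sig.

Definition hom (A B : Alg s) (f : A -> B) : Prop :=
  forall (o : sym s) (args : Fin.t (arity o) -> A),
    f (op A o args) = op B o (fun i => f (args i)).

Definition injective (X Y : Type) (f : X -> Y) : Prop :=
  forall x y, f x = f y -> x = y.
Definition surjective (X Y : Type) (f : X -> Y) : Prop :=
  forall y, exists x, f x = y.

Definition Class := Alg s -> Prop.

Definition subuniverse (B : Alg s) (S : B -> Prop) : Prop :=
  forall (o : sym s) (args : Fin.t (arity o) -> B),
    (forall i, S (args i)) -> S (op B o args).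

Definition subalg (B : Alg s) (S : B -> Prop) (HS : subuniverse S) : Alg s :=
  {| car := {b : B | S b};
     op := fun o args =>
       exist _ (op B o (fun i => proj1_sig (args i)))
             (HS o _ (fun i => proj2_sig (args i))) |}.

Definition Sg (B : Alg s) (X : B -> Prop) (b : B) : Prop :=
  forall T : B -> Prop, subuniverse T -> (forall x, X x -> T x) -> T b.

Definition prodA (I : Type) (A : I -> Alg s) : Alg s :=
  {| car := forall i, A i;
     op := fun o args i => op (A i) o (fun k => args k i) |}.

Definition ultrafilter (I : Type) (U : (I -> Prop) -> Prop) : Prop :=
  U (fun _ => True) /\ ~ U (fun _ => False) /\
  (forall X Y : I -> Prop, U X -> (forall i, X i -> Y i) -> U Y) /\
  (forall X Y : I -> Prop, U X -> U Y -> U (fun i => X i /\ Y i)) /\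
  (forall X : I -> Prop, U X \/ U (fun i => ~ X i)).

(* An ultraproduct prod A / U is represented
   (up to isomorphism) by any algebra C with a surjective homomorphism
   prod A -> C whose kernel is the ultrafilter congruence. *)
Definition quasivariety (K : Class) : Prop :=
  (forall (A B : Alg s) (f : A -> B),
      hom f -> injective f -> surjective f -> K A -> K B) /\
  (forall (B : Alg s) (S : B -> Prop) (HS : subuniverse S),
      K B -> K (subalg HS)) /\
  (forall (I : Type) (A : I -> Alg s), (forall i, K (A i)) -> K (prodA A)) /\
  (forall (I : Type) (A : I -> Alg s) (U : (I -> Prop) -> Prop)
          (C : Alg s) (h : prodA A -> C),
      ultrafilter U -> (forall i, K (A i)) ->
      hom h -> surjective h ->
      (forall x y : prodA A, h x = h y <-> U (fun i => x i = y i)) ->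
      K C).

(* A (given as the subuniverse S of B) is epic in K. *)
Definition epic (K : Class) (B : Alg s) (S : B -> Prop) : Prop :=
  forall (C : Alg s) (g h : B -> C), K C -> hom g -> hom h ->
    (forall a, S a -> g a = h a) -> forall b, g b = h b.

(* theta in Con_K(B): theta is a congruence of B with B/theta in K, i.e.
   theta is the kernel of a surjective homomorphism onto a member of K. *)
Definition ConK (K : Class) {B : Alg s} (theta : B -> B -> Prop) : Prop :=
  exists (C : Alg s) (h : B -> C),
    K C /\ hom h /\ surjective h /\ (forall x y, theta x y <-> h x = h y).

Definition full (K : Class) (B : Alg s) (S : B -> Prop) : Prop :=
  (exists b, ~ S b) /\
  (exists b, forall x, Sg (fun y => S y \/ y = b) x) /\
  (forall theta : B -> B -> Prop, ConK K theta ->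
     ~ (forall x y, theta x y <-> x = y) ->
     forall b, exists a, S a /\ theta a b).

Definition RSI (K : Class) (D : Alg s) : Prop :=
  K D /\ (exists x y : D, x <> y) /\
  (forall (I : Type) (C : I -> Alg s) (f : D -> prodA C),
     (forall i, K (C i)) -> hom f -> injective f ->
     (forall i, surjective (fun x => f x i)) ->
     exists i, injective (fun x => f x i) /\ surjective (fun x => f x i)).

Definition in_S_RSI (K : Class) (A : Alg s) : Prop :=
  exists (D : Alg s) (f : A -> D), RSI K D /\ hom f /\ injective f.

End UA.

Arguments epic {s} K B S.
Arguments full {s} K B S.

(* Since A is not epic, there are homomorphisms g, h : B -> C into some C in K
   that agree on A but differ at some b.  By Zorn's lemma there is a
   K-congruence psi of C maximal among those not identifying g b and h b; a
   chain of K-congruences has a K-congruence as its union because the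
   quotient by the union embeds into an ultraproduct of the quotients along
   the chain.  Every K-congruence strictly above psi identifies g b and h b,
   which makes D := C/psi relatively subdirectly irreducible.  Finally
   a |-> (g a)/psi is injective on A: otherwise the kernel of
   x |-> ((g x)/psi, (h x)/psi) is a nontrivial K-congruence of B, so by
   fullness it relates b to some a in A, and then
   (g b)/psi = (g a)/psi = (h a)/psi = (h b)/psi. *)

From mathcomp Require classical_sets.
From Stdlib Require Import Classical ClassicalEpsilon FunctionalExtensionality
  PropExtensionality ProofIrrelevance RelationClasses.

Set Implicit Arguments.
Unset Strict Implicit.

Lemma pred_ext (T : Type) (A B : T -> Prop) : (forall t, A t <-> B t) -> A = B.
Proof.
  intros AB. apply functional_extensionality. intro t.
  apply propositional_extensionality, AB.
Qed.

Section Zorn.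
Variable T : Type.

Definition chain (F : (T -> Prop) -> Prop) : Prop :=
  forall A B, F A -> F B -> (forall t, A t -> B t) \/ (forall t, B t -> A t).

Definition bigunion (F : (T -> Prop) -> Prop) (t : T) : Prop := exists2 A, F A & A t.

Lemma zorn_above (P : (T -> Prop) -> Prop) (A0 : T -> Prop) :
  P A0 ->
  (forall F, (exists A, F A) -> chain F -> (forall A, F A -> P A) -> P (bigunion F)) ->
  exists A, P A /\ (forall t, A0 t -> A t) /\
    forall B, P B -> (forall t, A t -> B t) -> forall t, B t -> A t.
Proof.
  intros PA0 Pchain.
  (* Zorn is applied to A |-> P (A \/ A0), so that the empty chain is covered by P A0. *)
  set (Q := fun A => P (fun t => A t \/ A0 t)).
  destruct (@classical_sets.Zorn_bigcup T Q) as [A [QA Amax]].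
  - intros F FQ Fchain. unfold Q.
    destruct (classic (exists A, F A)) as [[A FA]|noF].
    + set (G := fun Y => exists2 X, F X & Y = (fun t => X t \/ A0 t)).
      match goal with |- P ?U => replace U with (bigunion G) end.
      * apply Pchain.
        -- exists (fun t => A t \/ A0 t), A; auto.
        -- intros Y1 Y2 [X1 F1 ->] [X2 F2 ->].
           destruct (Fchain X1 X2 F1 F2) as [s12|s21]; [left|right];
             intros t [Xt|A0t]; auto.
        -- intros Y [X FX ->]. exact (FQ X FX).
      * apply pred_ext. intro t. split.
        -- intros [Y [X FX ->] [Xt|A0t]]; [left; exists X|right]; auto.
        -- intros [[X FX Xt]|A0t];
             [exists (fun t => X t \/ A0 t)|exists (fun t => A t \/ A0 t)];
             try (eexists; [eassumption|reflexivity]); auto.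
    + match goal with |- P ?U => replace U with A0; [exact PA0|] end.
      apply pred_ext. intro t. split; [auto|].
      intros [[X FX _]|A0t]; [exfalso; apply noF; exists X|]; assumption.
  - exists (fun t => A t \/ A0 t). split; [exact QA|]. split; [auto|].
    intros B PB AB t Bt.
    assert (QB : Q B).
    { unfold Q. replace (fun t => B t \/ A0 t) with B; [exact PB|].
      apply pred_ext. intro u. split; [auto|]. intros [Bu|A0u]; auto. }
    apply NNPP. intro nt. apply (Amax B); [|exact QB].
    split; [intros u Au; apply AB; left; exact Au|].
    intro BA. apply nt. left. exact (BA t Bt).
Qed.

End Zorn.

Section Filters.
Variable I : Type.

Definition filter (F : (I -> Prop) -> Prop) : Prop :=
  F (fun _ => True) /\
  (forall X Y : I -> Prop, F X -> (forall i, X i -> Y i) -> F Y) /\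
  (forall X Y : I -> Prop, F X -> F Y -> F (fun i => X i /\ Y i)).

Definition proper_filter (F : (I -> Prop) -> Prop) : Prop :=
  filter F /\ ~ F (fun _ => False).

Lemma ultrafilter_proper_filter (U : (I -> Prop) -> Prop) :
  ultrafilter U -> proper_filter U.
Proof. intros (u1 & u0 & u2 & u3 & _). repeat split; assumption. Qed.

Lemma proper_filter_inhabited (F : (I -> Prop) -> Prop) (X : I -> Prop) :
  proper_filter F -> F X -> exists i, X i.
Proof.
  intros [(_ & up & _) nF] FX. apply NNPP. intro noX.
  apply nF, (up X); [exact FX|]. intros i Xi. apply noX. exists i; exact Xi.
Qed.

Lemma filter_fin_inter (F : (I -> Prop) -> Prop) :
  filter F -> forall n (X : Fin.t n -> I -> Prop),
  (forall k, F (X k)) -> F (fun i => forall k, X k i).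
Proof.
  intros (top & up & meet). induction n as [|n IH]; intros X FX.
  - apply (up _ _ top). intros i _ k. exact (Fin.case0 (fun k => X k i) k).
  - apply (up (fun i => X Fin.F1 i /\ forall k, X (Fin.FS k) i)).
    + apply meet; [apply FX|]. apply (IH (fun k => X (Fin.FS k))). intro k; apply FX.
    + intros i [X1 XS] k. exact (Fin.caseS' k (fun k => X k i) X1 XS).
Qed.

Lemma proper_filter_chain_union (Fam : ((I -> Prop) -> Prop) -> Prop) :
  (exists G, Fam G) -> chain Fam -> (forall G, Fam G -> proper_filter G) ->
  proper_filter (bigunion Fam).
Proof.
  intros [G0 FG0] Fchain Fproper. split; [split; [|split]|].
  - exists G0; [exact FG0|]. apply (Fproper G0 FG0).
  - intros X Y [G FG GX] XY. exists G; [exact FG|].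
    destruct (Fproper G FG) as [(_ & up & _) _]. exact (up X Y GX XY).
  - intros X Y [G1 F1 G1X] [G2 F2 G2Y].
    destruct (Fchain G1 G2 F1 F2) as [s12|s21].
    + exists G2; [exact F2|]. destruct (Fproper G2 F2) as [(_ & _ & meet) _].
      exact (meet X Y (s12 X G1X) G2Y).
    + exists G1; [exact F1|]. destruct (Fproper G1 F1) as [(_ & _ & meet) _].
      exact (meet X Y G1X (s21 Y G2Y)).
  - intros [G FG GF]. exact (proj2 (Fproper G FG) GF).
Qed.

Lemma maximal_proper_filter_ultra (U : (I -> Prop) -> Prop) :
  proper_filter U ->
  (forall G, proper_filter G -> (forall X, U X -> G X) -> forall X, G X -> U X) ->
  ultrafilter U.
Proof.
  intros [(top & up & meet) nU] Umax.
  refine (conj top (conj nU (conj up (conj meet _)))).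
  intro X. destruct (classic (U (fun i => ~ X i))) as [UnX|nUnX]; [right; exact UnX|left].
  (* U together with X generates a proper filter, since U does not contain ~X. *)
  set (G := fun Z => exists2 Y, U Y & forall i, Y i -> X i -> Z i).
  apply (Umax G).
  - split; [split; [|split]|].
    + exists (fun _ => True); auto.
    + intros Z1 Z2 [Y UY YZ] Z12. exists Y; auto.
    + intros Z1 Z2 [Y1 U1 YZ1] [Y2 U2 YZ2]. exists (fun i => Y1 i /\ Y2 i).
      * exact (meet _ _ U1 U2).
      * intros i [Y1i Y2i] Xi. auto.
    + intros [Y UY YF]. apply nUnX, (up Y); [exact UY|]. intros i Yi Xi. exact (YF i Yi Xi).
  - intros Y UY. exists Y; auto.
  - exists (fun _ => True); auto.
Qed.

Lemma ultrafilter_extension (F : (I -> Prop) -> Prop) :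
  proper_filter F -> exists U, ultrafilter U /\ forall X, F X -> U X.
Proof.
  intros PF.
  destruct (@zorn_above (I -> Prop) proper_filter F PF proper_filter_chain_union)
    as [U (PU & FU & Umax)].
  exists U. split; [|exact FU].
  apply maximal_proper_filter_ultra; [exact PU|]. exact Umax.
Qed.

Lemma tail_filter_proper (le : I -> I -> Prop) (i0 : I) :
  PreOrder le -> (forall j1 j2, exists j, le j1 j /\ le j2 j) ->
  proper_filter (fun Y => exists k, forall j, le k j -> Y j).
Proof.
  intros [le_refl le_trans] directed. split; [split; [|split]|].
  - exists i0. auto.
  - intros X Y [k Xk] XY. exists k. auto.
  - intros X Y [k1 X1] [k2 Y2]. destruct (directed k1 k2) as [k [k1k k2k]].
    exists k. intros j kj. split; [apply X1, (le_trans _ _ _ k1k kj)|apply Y2, (le_trans _ _ _ k2k kj)].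
  - intros [k Fk]. exact (Fk k (le_refl k)).
Qed.

End Filters.

Section Algebras.
Variable s : Sig.

Lemma hom_comp (A B C : Alg s) (f : A -> B) (g : B -> C) :
  hom f -> hom g -> hom (fun x => g (f x)).
Proof. intros hf hg o args. now rewrite hf, hg. Qed.

Lemma hom_id (A : Alg s) : hom (fun x : A => x).
Proof. intros o args. reflexivity. Qed.

Lemma hom_into_prodA (C : Alg s) (J : Type) (E : J -> Alg s) (p : forall j, C -> E j) :
  (forall j, hom (p j)) -> hom (fun c : C => (fun j => p j c) : prodA E).
Proof.
  intros hp o args. apply functional_extensionality_dep. intro j. apply hp.
Qed.

Lemma hom_prodA_proj (C : Alg s) (J : Type) (E : J -> Alg s) (f : C -> prodA E) (j : J) :
  hom f -> hom (fun c => f c j).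
Proof. intros hf o args. now rewrite hf. Qed.

Definition compatible (A : Alg s) (R : A -> A -> Prop) : Prop :=
  forall o (args1 args2 : Fin.t (arity o) -> A),
    (forall k, R (args1 k) (args2 k)) -> R (op A o args1) (op A o args2).

Lemma quotient_exists (A : Alg s) (R : A -> A -> Prop) :
  Equivalence R -> compatible R ->
  exists (Q : Alg s) (q : A -> Q), hom q /\ surjective q /\
    forall x y, q x = q y <-> R x y.
Proof.
  intros [Rrefl Rsym Rtrans] Rcomp.
  set (cls := fun x : A => exist (fun P => exists y, P = R y) (R x) (ex_intro _ x eq_refl)).
  assert (cls_eq : forall x y, cls x = cls y <-> R x y).
  { intros x y. split.
    - intro E. apply (f_equal (@proj1_sig _ _)) in E. simpl in E. rewrite E. apply Rrefl.
    - intro Rxy. apply subset_eq_compat, pred_ext. intro z.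
      split; intro H; eapply Rtrans; eauto. }
  set (rep := fun p : {P | exists y, P = R y} =>
                proj1_sig (constructive_indefinite_description _ (proj2_sig p))).
  assert (cls_rep : forall p, cls (rep p) = p).
  { intros [P HP]. apply subset_eq_compat. symmetry.
    exact (proj2_sig (constructive_indefinite_description _ HP)). }
  exists {| car := {P | exists y, P = R y};
            op := fun o args => cls (op A o (fun k => rep (args k))) |}, cls.
  split; [|split; [|exact cls_eq]].
  - intros o args. apply cls_eq, Rcomp. intro k. apply Rsym, cls_eq, cls_rep.
  - intro p. exists (rep p). apply cls_rep.
Qed.

Lemma reduced_product_exists (J : Type) (E : J -> Alg s) (U : (J -> Prop) -> Prop) :
  filter U ->
  exists (Q : Alg s) (q : prodA E -> Q), hom q /\ surjective q /\
    forall x y, q x = q y <-> U (fun j => x j = y j).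
Proof.
  intros HU. pose proof HU as (top & up & meet).
  apply quotient_exists.
  - split.
    + intro x. apply (up _ _ top). reflexivity.
    + intros x y Uxy. apply (up _ _ Uxy). auto.
    + intros x y z Uxy Uyz. apply (up _ _ (meet _ _ Uxy Uyz)). intros j [-> ->]. reflexivity.
  - intros o args1 args2 Uargs.
    apply (up _ _ (filter_fin_inter HU (X := fun k j => args1 k j = args2 k j) Uargs)).
    intros j Hj. simpl. f_equal. apply functional_extensionality. exact Hj.
Qed.

Lemma image_subuniverse (A B : Alg s) (f : A -> B) :
  hom f -> subuniverse (fun y => exists x, f x = y).
Proof.
  intros hf o args Hargs.
  exists (op A o (fun k => proj1_sig (constructive_indefinite_description _ (Hargs k)))).
  rewrite hf. f_equal. apply functional_extensionality. intro k.
  exact (proj2_sig (constructive_indefinite_description _ (Hargs k))).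
Qed.

Section Quasivariety.
Variable K : Class s.
Hypothesis qv : quasivariety K.

Lemma ConK_ext (B : Alg s) (theta theta' : B -> B -> Prop) :
  ConK K theta -> (forall x y, theta x y <-> theta' x y) -> ConK K theta'.
Proof.
  intros (C & h & KC & hh & sh & Eh) E. exists C, h.
  repeat split; try assumption; intro H.
  - apply Eh, E, H.
  - apply E, Eh, H.
Qed.

Lemma ConK_kernel (B Q : Alg s) (f : B -> Q) :
  K Q -> hom f -> ConK K (fun x y => f x = f y).
Proof.
  intros KQ hf. destruct qv as (_ & qS & _).
  pose proof (image_subuniverse hf) as HIm.
  exists (subalg HIm), (fun x => exist _ (f x) (ex_intro _ x eq_refl)).
  repeat split.
  - exact (qS _ _ HIm KQ).
  - intros o args. apply subset_eq_compat, hf.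
  - intros [y [x Hx]]. exists x. now apply subset_eq_compat.
  - intro E. now apply subset_eq_compat.
  - intro E. exact (f_equal (@proj1_sig _ _) E).
Qed.

Lemma ConK_chain_union (C : Alg s) (F : (C * C -> Prop) -> Prop) :
  (exists A, F A) -> chain F -> (forall A, F A -> ConK K (fun x y => A (x, y))) ->
  ConK K (fun x y => bigunion F (x, y)).
Proof.
  intros [A0 FA0] Fchain FK.
  set (J := {A | F A}).
  assert (quot : forall j : J, {E : Alg s & {p : C -> E | K E /\ hom p /\
      forall x y, proj1_sig j (x, y) <-> p x = p y}}).
  { intro j. destruct (constructive_indefinite_description _ (FK _ (proj2_sig j))) as [E HE].
    destruct (constructive_indefinite_description _ HE) as [p (KE & hp & _ & Ep)].
    exists E, p. auto. }
  set (E := fun j => projT1 (quot j)).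
  set (p := fun j => proj1_sig (projT2 (quot j)) : C -> E j).
  assert (Hp : forall j, K (E j) /\ hom (p j) /\
      forall x y, proj1_sig j (x, y) <-> p j x = p j y).
  { intro j. exact (proj2_sig (projT2 (quot j))). }
  set (le := fun j1 j2 : J => forall t, proj1_sig j1 t -> proj1_sig j2 t).
  assert (tail : proper_filter (fun Y => exists k, forall j, le k j -> Y j)).
  { apply (tail_filter_proper (exist _ A0 FA0)).
    - split; [intros j t; auto|intros j1 j2 j3 H12 H23 t H; auto].
    - intros j1 j2. destruct (Fchain _ _ (proj2_sig j1) (proj2_sig j2)) as [s12|s21].
      + exists j2. split; [exact s12|intros t; auto].
      + exists j1. split; [intros t; auto|exact s21]. }
  destruct (ultrafilter_extension tail) as [U [HU tailU]].
  pose proof (ultrafilter_proper_filter HU) as PU.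
  destruct (reduced_product_exists E (proj1 PU)) as (Q & q & hq & sq & Eq).
  destruct qv as (_ & _ & _ & qU).
  assert (KQ : K Q) by (apply (qU J E U Q q HU); auto; intro j; apply Hp).
  assert (hdiag : hom (fun c => q (fun j => p j c))).
  { apply (hom_comp (hom_into_prodA (fun j => proj1 (proj2 (Hp j)))) hq). }
  apply (ConK_ext (ConK_kernel KQ hdiag)). intros x y. split.
  - intro Exy. apply Eq in Exy.
    destruct (proper_filter_inhabited PU Exy) as [j Ej].
    exists (proj1_sig j); [exact (proj2_sig j)|]. apply (Hp j), Ej.
  - intros [A FA Axy]. apply Eq, tailU. exists (exist _ A FA).
    intros j Aj. apply (Hp j), Aj, Axy.
Qed.

Definition kernel_maximal_separating (C D : Alg s) (pi : C -> D) (c1 c2 : C) : Prop :=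
  forall theta : C -> C -> Prop, ConK K theta ->
    (forall x y, pi x = pi y -> theta x y) -> ~ theta c1 c2 ->
    forall x y, theta x y -> pi x = pi y.

Lemma maximal_separating_quotient (C : Alg s) (c1 c2 : C) :
  K C -> c1 <> c2 ->
  exists (D : Alg s) (pi : C -> D), K D /\ hom pi /\ surjective pi /\
    pi c1 <> pi c2 /\ kernel_maximal_separating pi c1 c2.
Proof.
  intros KC neq.
  set (P := fun A : C * C -> Prop =>
              ConK K (fun x y => A (x, y)) /\ ~ A (c1, c2)).
  destruct (@zorn_above (C * C) P (fun xy => fst xy = snd xy)) as [A ((KA & nA) & _ & Amax)].
  - split; [exact (ConK_kernel KC (@hom_id C))|exact neq].
  - intros F Fne Fchain FP. split.
    + apply ConK_chain_union; auto. intros A FA. apply (FP A FA).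
    + intros [A FA Ac]. exact (proj2 (FP A FA) Ac).
  - destruct KA as (D & pi & KD & hpi & spi & Epi).
    exists D, pi. repeat split; try assumption.
    + intro E. apply nA, Epi, E.
    + intros theta Ktheta above ntheta x y txy.
      apply Epi, (Amax (fun xy => theta (fst xy) (snd xy))) with (t := (x, y)); auto.
      * split; [apply (ConK_ext Ktheta); reflexivity|exact ntheta].
      * intros [u v] Auv. apply above, Epi, Auv.
Qed.

Lemma RSI_of_maximal_separating (C D : Alg s) (pi : C -> D) (c1 c2 : C) :
  K D -> hom pi -> surjective pi -> pi c1 <> pi c2 ->
  kernel_maximal_separating pi c1 c2 -> RSI K D.
Proof.
  intros KD hpi spi sep pimax. split; [exact KD|].
  split; [exists (pi c1), (pi c2); exact sep|].
  intros J E f KE hf injf surjf. apply NNPP. intro no_iso.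
  apply sep, injf. apply functional_extensionality_dep. intro j.
  set (theta := fun x y => f (pi x) j = f (pi y) j).
  assert (Ktheta : ConK K theta)
    by exact (ConK_kernel (KE j) (hom_comp hpi (hom_prodA_proj j hf))).
  apply NNPP. intro ntheta. apply no_iso. exists j. split; [|apply surjf].
  (* theta lies above ker pi and separates c1, c2, so maximality forces theta = ker pi. *)
  intros d1 d2 Ed. destruct (spi d1) as [x1 <-]. destruct (spi d2) as [x2 <-].
  apply (pimax theta Ktheta); [|exact ntheta|exact Ed].
  intros x y Exy. unfold theta. now rewrite Exy.
Qed.

Lemma full_separating_injective (B D : Alg s) (S : B -> Prop) (p q : B -> D) (b : B) :
  full K B S -> K D -> hom p -> hom q -> (forall a, S a -> p a = q a) -> p b <> q b ->
  forall x y, S x -> S y -> p x = p y -> x = y.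
Proof.
  intros (_ & _ & Sfull) KD hp hq agree sep x y Sx Sy Exy.
  set (pair := fun c : B => (fun t : bool => if t then p c else q c) : prodA (fun _ => D)).
  assert (hpair : hom pair).
  { apply hom_into_prodA. intros [|]; assumption. }
  destruct qv as (_ & _ & qP & _).
  pose proof (ConK_kernel (qP bool (fun _ => D) (fun _ => KD)) hpair) as Kker.
  apply NNPP. intro nxy.
  destruct (Sfull _ Kker) with (b := b) as [a [Sa Eab]].
  - intro trivial_ker. apply nxy, trivial_ker. unfold pair.
    apply functional_extensionality_dep. intros [|]; [exact Exy|].
    now rewrite <- (agree x Sx), <- (agree y Sy).
  - pose proof (f_equal (fun z => z true) Eab) as Ep.
    pose proof (f_equal (fun z => z false) Eab) as Eq.
    simpl in Ep, Eq. apply sep. rewrite <- Ep, <- Eq. exact (agree a Sa).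
Qed.

End Quasivariety.

Lemma not_epic_witness (K : Class s) (B : Alg s) (S : B -> Prop) :
  ~ epic K B S ->
  exists (C : Alg s) (g h : B -> C) (b : B), K C /\ hom g /\ hom h /\
    (forall a, S a -> g a = h a) /\ g b <> h b.
Proof.
  intros nepic. apply NNPP. intro nwit. apply nepic.
  intros C g h KC hg hh agree b. apply NNPP. intro sep.
  apply nwit. exists C, g, h, b. auto.
Qed.

End Algebras.

Theorem mainTheorem7 (s : Sig) (K : Class s) (B : Alg s) (S : B -> Prop)
  (HS : subuniverse S) :
  quasivariety K -> K B -> full K B S -> ~ epic K B S ->
  in_S_RSI K (subalg HS).
Proof.
  intros qv KB Sfull nepic.
  destruct (not_epic_witness nepic) as (C & g & h & b & KC & hg & hh & agree & sep).
  destruct (maximal_separating_quotient qv KC sep)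
    as (D & pi & KD & hpi & spi & sep_pi & pimax).
  exists D, (fun a => pi (g (proj1_sig a))). split; [|split].
  - exact (RSI_of_maximal_separating qv KD hpi spi sep_pi pimax).
  - intros o args. simpl. now rewrite hg, hpi.
  - intros [x Sx] [y Sy] Exy. apply subset_eq_compat.
    refine (full_separating_injective qv Sfull KD (hom_comp hg hpi) (hom_comp hh hpi)
              _ sep_pi Sx Sy Exy).
    intros a Sa. simpl. now rewrite (agree a Sa).
Qed.
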